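(* Fix $c > 0$. For a set $L \subset [k+\ell-2]$ with $|L| = \ell - 1$ (where $\ell,k \in \mathbb{N}$), define $$m(L) = \max\big\{ 1 \le m \le k+\ell-2 \,:\, |L \cap [m]| \le c \log m \text{ or } [m] \subset L \big\},$$ $$\ell'(L) = |L \cap [m(L)]| + 1, \qquad k'(L) = m(L) - \ell'(L) + 2.$$ Then for every $\ell, k \in \mathbb{N}$, $$R(\ell,k) \le \sum_{L \in \binom{[k+\ell-2]}{\ell-1}} \binom{k'(L)+\ell'(L)-2}{\ell'(L)-1}^{-1} R\big(\ell'(L), k'(L)\big).$$
   Context: $[m] = \{1,\dots,m\}$, and $\binom{[N]}{j}$ denotes the family of $j$-element subsets of $[N]$. $\log$ is the natural logarithm. For $\ell,k \in \mathbb{N}$, the Ramsey number $R(\ell,k)$ is the smallest $n \in \mathbb{N}$ such that every red-blue colouring of the edges of the complete graph $K_n$ contains either a red copy of $K_\ell$ or a blue copy of $K_k$; by convention $R(1,k) = R(\ell,1) = 1$. *)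

From HB Require Import structures.
From mathcomp Require Import all_boot all_order all_algebra.
From mathcomp Require Import all_classical all_reals all_analysis.
From Stdlib Require Import ClassicalEpsilon.
Set Implicit Arguments. Unset Strict Implicit. Unset Printing Implicit Defensive.
Import Order.TTheory GRing.Theory Num.Theory.

(* A red/blue colouring of the edges of K_n on vertex set 'I_n: the edge {x,y}
   with x < y gets colour f (x, y) (true = red, false = blue). *)
Definition red_clique n (f : {ffun 'I_n * 'I_n -> bool}) (S : {set 'I_n}) : bool :=
  [forall x in S, forall y in S, (x < y)%N ==> f (x, y)].
Definition blue_clique n (f : {ffun 'I_n * 'I_n -> bool}) (S : {set 'I_n}) : bool :=
  [forall x in S, forall y in S, (x < y)%N ==> ~~ f (x, y)].

Definition ramsey_prop (l k n : nat) : bool :=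
  [forall f : {ffun 'I_n * 'I_n -> bool},
     [exists S : {set 'I_n}, (#|S| == l) && red_clique f S]
  || [exists S : {set 'I_n}, (#|S| == k) && blue_clique f S]].

(* R(l,k): the least such n (Ramsey's theorem guarantees existence;
   the fallback 0 is never used for l, k >= 1). *)
Definition ramsey (l k : nat) : nat :=
  match excluded_middle_informative (exists n, ramsey_prop l k n) with
  | left H => ex_minn H
  | right _ => 0%N
  end.

Section MLK.
Variables (R : realType) (c : R).
Local Open Scope ring_scope.

(* [N] = {1,..,N} is represented by 'I_N via i |-> i+1, so
   L \cap [m] corresponds to {i in L | i < m}. *)
Definition capm N (L : {set 'I_N}) (m : nat) : {set 'I_N} :=
  [set i in L | (i < m)%N].

(* m(L) = max{1 <= m <= N : |L cap [m]| <= c log m or [m] subset L}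
   (with max of the empty set = 0, relevant only when N = 0). *)
Definition mL N (L : {set 'I_N}) : nat :=
  \max_(m < N.+1 | (1 <= m)%N &&
      (((#|capm L m|)%:R <= c * ln (m%:R : R))
       || [forall i : 'I_N, (i < m)%N ==> (i \in L)])) (m : nat).

Definition lL N (L : {set 'I_N}) : nat := (#|capm L (mL L)|).+1.
(* k'(L) = m(L) - l'(L) + 2 ; note l'(L) <= m(L) + 1 so this is >= 1 *)
Definition kL N (L : {set 'I_N}) : nat := ((mL L).+2 - lL L)%N.
End MLK.

From HB Require Import structures.
From mathcomp Require Import all_boot all_order all_algebra.
From mathcomp Require Import all_classical all_reals all_analysis.
From mathcomp Require Import zify.
From Stdlib Require Import ClassicalEpsilon.
Import Order.TTheory GRing.Theory Num.Theory.

(* The Erdos-Szekeres recursion R(j+1, b+1-j) <= R(j, b+1-j) + R(j+1, b-j) is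
   unfolded one element of [N] at a time, a set L recording at which steps the
   first argument dropped.  By induction on b,
     R(j+1, b+1-j) <= sum_{L in [b] choose j} C(m, j')^-1 R(j'+1, m+1-j'),
   where m <= b is the largest stopping time of L up to b and j' = |L cap [m]|.
   If b is itself a stopping time (for L in [b] this depends on |L| only), the
   C(b, j) summands coincide and the binomial cancels their number; otherwise
   m does not depend on whether b is in L, and Pascal's rule splits the sum
   into the two instances at b - 1.  Taking b = k + l - 2 and j = l - 1 gives
   the theorem. *)

Set Implicit Arguments. Unset Strict Implicit. Unset Printing Implicit Defensive.

Local Notation subsetP := fintype.subsetP.
Local Notation subset_trans := fintype.subset_trans.
Local Notation set0 := finset.set0.
Local Notation sub1set := finset.sub1set.
Local Notation subUset := finset.subUset.
Local Notation setD1K := finset.setD1K.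
Local Notation eqEsubset := finset.eqEsubset.
Local Notation subsetT := finset.subsetT.

Definition ord_clique n (f : {ffun 'I_n * 'I_n -> bool}) (b : bool)
    (S : {set 'I_n}) : bool :=
  [forall x in S, forall y in S, (x < y)%N ==> (f (x, y) == b)].

Lemma ord_cliqueP n (f : {ffun 'I_n * 'I_n -> bool}) b (S : {set 'I_n}) :
  reflect {in S &, forall x y : 'I_n, (x < y)%N -> f (x, y) = b}
          (ord_clique f b S).
Proof.
apply: (iffP forall_inP) => [H x y xS yS xy | H x xS].
  by have /forall_inP/(_ y yS)/implyP/(_ xy)/eqP := H x xS.
by apply/forall_inP => y yS; apply/implyP => xy; rewrite (H x y).
Qed.

Lemma ramsey_propE l k n : ramsey_prop l k n =
  [forall f : {ffun 'I_n * 'I_n -> bool},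
     [exists S : {set 'I_n}, (#|S| == l) && ord_clique f true S]
  || [exists S : {set 'I_n}, (#|S| == k) && ord_clique f false S]].
Proof.
apply: eq_forallb => f; congr (_ || _); apply: eq_existsb => S; congr (_ && _);
  apply: eq_forallb_in => x _; apply: eq_forallb_in => y _.
  by rewrite eqb_id.
by rewrite eqbF_neg.
Qed.

Section MonochromaticCliques.
Variables (T : finType) (g : T -> T -> bool).

Definition clique_in (b : bool) (V : {set T}) (n : nat) : Prop :=
  exists S : {set T},
    [/\ S \subset V, #|S| = n & {in S &, forall x y, x != y -> g x y = b}].

Definition mono_clique (l k : nat) (V : {set T}) : Prop :=
  clique_in true V l \/ clique_in false V k.

Lemma clique_in_sub b (V W : {set T}) n :
  W \subset V -> clique_in b W n -> clique_in b V n.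
Proof.
by move=> sWV [S [sSW cS hS]]; exists S; split=> //; apply: subset_trans sWV.
Qed.

Hypothesis g_sym : forall x y, g x y = g y x.

Lemma clique_in_pivot b v (V W : {set T}) n :
  v \in V -> W \subset V :\ v -> {in W, forall u, g v u = b} ->
  clique_in b W n -> clique_in b V n.+1.
Proof.
move=> vV sWV gvW [S [sSW cS hS]].
have sSV : S \subset V :\ v := subset_trans sSW sWV.
have vS : v \notin S by apply/negP => /(subsetP sSV); rewrite setD11.
exists (v |: S); split.
- by rewrite subUset sub1set vV (subset_trans sSV) ?subD1set.
- by rewrite cardsU1 vS cS.
- move=> x y /setU1P [-> | xS] /setU1P [-> | yS] xy; first by rewrite eqxx in xy.
  + exact: gvW (subsetP sSW _ yS).
  + by rewrite g_sym; apply: gvW (subsetP sSW _ xS).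
  + exact: hS.
Qed.

Lemma ramsey_prop_mono_clique l k m (V : {set T}) :
  ramsey_prop l k m -> (m <= #|V|)%N -> mono_clique l k V.
Proof.
move=> Hm mV; pose h (i : 'I_m) : T := enum_val (widen_ord mV i).
have h_inj : injective h by move=> i j /enum_val_inj /(congr1 val) /= /val_inj.
pose f := [ffun p : 'I_m * 'I_m => g (h p.1) (h p.2)].
have clique_img b S : ord_clique f b S -> clique_in b V #|S|.
  move/ord_cliqueP => fS; exists (h @: S); split.
  - by apply/subsetP => _ /imsetP [i _ ->]; apply: enum_valP.
  - by rewrite card_imset.
  - move=> _ _ /imsetP [i iS ->] /imsetP [j jS ->] hij.
    case: (ltngtP i j) => [ij | ji | /val_inj eij].
    + by have := fS i j iS jS ij; rewrite ffunE.
    + by rewrite g_sym; have := fS j i jS iS ji; rewrite ffunE.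
    + by rewrite eij eqxx in hij.
move: Hm; rewrite ramsey_propE => /forallP /(_ f).
by case/orP => /existsP [S /andP [/eqP <- fS]]; [left | right]; apply: clique_img.
Qed.

Lemma mono_clique_add l k a b (V : {set T}) :
  ramsey_prop l k.+1 a -> ramsey_prop l.+1 k b ->
  (0 < #|V|)%N -> (a + b <= #|V|)%N -> mono_clique l.+1 k.+1 V.
Proof.
move=> Ha Hb V_gt0 abV.
have [v vV] : exists v, v \in V by apply/set0Pn; rewrite -card_gt0.
pose red := (V :\ v) :&: [set u | g v u].
pose blue := (V :\ v) :\: [set u | g v u].
have sub_red : red \subset V :\ v by apply: subsetIl.
have sub_blue : blue \subset V :\ v by apply: subsetDl.
have subV (W : {set T}) : W \subset V :\ v -> W \subset V.
  by move/subset_trans; apply; apply: subD1set.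
have g_red : {in red, forall u, g v u = true}.
  by move=> u; rewrite inE => /andP [_]; rewrite inE.
have g_blue : {in blue, forall u, g v u = false}.
  by move=> u; rewrite inE => /andP [+ _]; rewrite inE => /negbTE.
have : (a <= #|red|)%N || (b <= #|blue|)%N.
  move: abV; rewrite /red /blue (cardsD1 v V) vV.
  by rewrite -(cardsID [set u | g v u] (V :\ v)); lia.
case/orP => [/(ramsey_prop_mono_clique Ha) | /(ramsey_prop_mono_clique Hb)]
  [K | K].
- by left; apply: clique_in_pivot vV sub_red g_red K.
- by right; apply: clique_in_sub (subV _ sub_red) K.
- by left; apply: clique_in_sub (subV _ sub_blue) K.
- by right; apply: clique_in_pivot vV sub_blue g_blue K.
Qed.

End MonochromaticCliques.

Definition sym_colouring n (f : {ffun 'I_n * 'I_n -> bool}) (x y : 'I_n) : bool :=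
  if (x < y)%N then f (x, y) else f (y, x).

Lemma sym_colouringC n (f : {ffun 'I_n * 'I_n -> bool}) x y :
  sym_colouring f x y = sym_colouring f y x.
Proof. by rewrite /sym_colouring; case: (ltngtP x y) => // /val_inj ->. Qed.

Lemma ramsey_prop_of_mono_clique l k n :
  (forall f, mono_clique (@sym_colouring n f) l k [set: 'I_n]) ->
  ramsey_prop l k n.
Proof.
have ord_clique_of b f m : clique_in (@sym_colouring n f) b [set: 'I_n] m ->
    [exists S : {set 'I_n}, (#|S| == m) && ord_clique f b S].
  case=> S [_ cS fS]; apply/existsP; exists S; rewrite cS eqxx.
  apply/ord_cliqueP => x y xS yS xy.
  have := fS x y xS yS; rewrite /sym_colouring xy; apply.
  by apply: contraTneq xy => ->; rewrite ltnn.
move=> H; rewrite ramsey_propE; apply/forallP => f.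
by case: (H f) => /ord_clique_of ->; rewrite ?orbT.
Qed.

Lemma ramsey_prop_add l k a b :
  ramsey_prop l k.+1 a -> ramsey_prop l.+1 k b -> (0 < a + b)%N ->
  ramsey_prop l.+1 k.+1 (a + b).
Proof.
move=> Ha Hb ab_gt0; apply: ramsey_prop_of_mono_clique => f.
by apply: (mono_clique_add (@sym_colouringC _ f) Ha Hb); rewrite cardsT card_ord.
Qed.

Lemma ramsey_prop_leq l k m n :
  (m <= n)%N -> ramsey_prop l k m -> ramsey_prop l k n.
Proof.
move=> mn Hm; apply: ramsey_prop_of_mono_clique => f.
apply: (ramsey_prop_mono_clique (@sym_colouringC _ f) Hm).
by rewrite cardsT card_ord.
Qed.

Lemma ord_clique0 n (f : {ffun 'I_n * 'I_n -> bool}) b : ord_clique f b set0.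
Proof. by apply/ord_cliqueP => x; rewrite inE. Qed.

Lemma ramsey_prop_exists l k : exists n, ramsey_prop l k n.
Proof.
have empty_clique n b (f : {ffun 'I_n * 'I_n -> bool}) :
    [exists S : {set 'I_n}, (#|S| == 0%N) && ord_clique f b S].
  by apply/existsP; exists set0; rewrite cards0 ord_clique0.
elim: l k => [|l IHl] k.
  by exists 0%N; rewrite ramsey_propE; apply/forallP => f; rewrite empty_clique.
elim: k => [|k [b Hb]].
  exists 0%N; rewrite ramsey_propE; apply/forallP => f.
  by rewrite empty_clique orbT.
have [a Ha] := IHl k.+1.
exists (a.+1 + b)%N; apply: ramsey_prop_add => //.
exact: ramsey_prop_leq Ha.
Qed.

Lemma ramsey_prop_ramsey l k : ramsey_prop l k (ramsey l k).
Proof.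
rewrite /ramsey; case: excluded_middle_informative => [H | []]; last first.
  exact: ramsey_prop_exists.
by case: ex_minnP.
Qed.

Lemma ramsey_min l k n : ramsey_prop l k n -> (ramsey l k <= n)%N.
Proof.
move=> Hn; rewrite /ramsey; case: excluded_middle_informative => [H | []].
  by case: ex_minnP => m _; apply.
by exists n.
Qed.

Lemma ramsey_gt0 l k : (0 < l)%N -> (0 < k)%N -> (0 < ramsey l k)%N.
Proof.
move=> l_gt0 k_gt0; have := ramsey_prop_ramsey l k.
rewrite lt0n; apply: contraTneq => ->.
rewrite ramsey_propE negb_forall; apply/existsP; exists [ffun=> true].
rewrite negb_or !negb_exists; apply/andP; split; apply/forallP => S;
  have := max_card S; rewrite card_ord leqn0 => /eqP ->.
- by rewrite (ltn_eqF l_gt0).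
- by rewrite (ltn_eqF k_gt0).
Qed.

Lemma ramsey_leSS l k : (0 < l)%N ->
  (ramsey l.+1 k.+1 <= ramsey l k.+1 + ramsey l.+1 k)%N.
Proof.
move=> l_gt0; apply/ramsey_min/ramsey_prop_add; try exact: ramsey_prop_ramsey.
by rewrite addn_gt0 ramsey_gt0.
Qed.

Section StoppingTime.
Local Open Scope ring_scope.
Variables (R : realType) (c : R) (N : nat).
Implicit Types L : {set 'I_N}.

Definition stops (L : {set 'I_N}) (m : nat) : bool :=
  (1 <= m)%N && (((#|capm L m|)%:R <= c * ln (m%:R : R))
                 || [forall i : 'I_N, (i < m)%N ==> (i \in L)]).

Definition stop_time (L : {set 'I_N}) (b : nat) : nat :=
  \max_(m < b.+1 | stops L m) (m : nat).

Definition weight (L : {set 'I_N}) (b : nat) : R :=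
  let m := stop_time L b in let j := #|capm L m| in
  ('C(m, j)%:R)^-1 * (ramsey j.+1 (m.+1 - j))%:R.

Definition initseg (b : nat) : {set 'I_N} := [set i : 'I_N | (i < b)%N].

Definition size_stops (b j : nat) : bool :=
  (0 < b)%N && ((j%:R <= c * ln (b%:R : R)) || (j == b)).

Lemma initsegT : initseg N = [set: 'I_N].
Proof. by apply/setP => i; rewrite !inE ltn_ord. Qed.

Lemma mL_stop_time (L : {set 'I_N}) : mL c L = stop_time L N.
Proof. by []. Qed.

Lemma stop_time_le L b : (stop_time L b <= b)%N.
Proof. by apply/bigmax_leqP => m _; rewrite -ltnS ltn_ord. Qed.

Lemma stop_time0 L : stop_time L 0 = 0%N.
Proof. by rewrite /stop_time big_mkcond big_ord1. Qed.

Lemma stop_timeS L b :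
  stop_time L b.+1 = if stops L b.+1 then b.+1 else stop_time L b.
Proof.
rewrite /stop_time [in LHS]big_mkcond big_ord_recr /= -big_mkcond /=.
by case: ifP => _; [apply/maxn_idPr; rewrite leqW ?stop_time_le | rewrite maxn0].
Qed.

Lemma weight_stop_time L b1 b2 :
  stop_time L b1 = stop_time L b2 -> weight L b1 = weight L b2.
Proof. by rewrite /weight => ->. Qed.

Lemma card_initseg b : (b <= N)%N -> #|initseg b| = b.
Proof.
move=> bN; have -> : initseg b = widen_ord bN @: [set: 'I_b].
  apply/setP => i; rewrite inE; apply/idP/imsetP => [ib | [j _ ->]].
    by exists (Ordinal ib) => //; apply: val_inj.
  by rewrite /= ltn_ord.
by rewrite card_imset ?cardsT ?card_ord // => i j /(congr1 val) /= /val_inj.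
Qed.

Lemma capm_le L m : (#|capm L m| <= m)%N.
Proof.
have [mN | /ltnW Nm] := leqP m N.
  rewrite -{2}(card_initseg mN) subset_leq_card //.
  by apply/subsetP => i; rewrite !inE => /andP [].
by rewrite (leq_trans (max_card _)) ?card_ord.
Qed.

Lemma capm_id L b : L \subset initseg b -> capm L b = L.
Proof.
move=> /subsetP sL; apply/setP => i; rewrite inE.
by case iL: (i \in L) => //=; have := sL i iL; rewrite inE.
Qed.

Lemma stops_initseg L b : (b <= N)%N -> L \subset initseg b ->
  stops L b = size_stops b #|L|.
Proof.
move=> bN sL; rewrite /stops /size_stops capm_id //; congr (_ && (_ || _)).
have -> : [forall i : 'I_N, (i < b)%N ==> (i \in L)] = (initseg b \subset L).
  apply/forallP/subsetP => [H i | H i]; rewrite ?inE; first exact/implyP.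
  by apply/implyP => ib; apply: H; rewrite inE.
by rewrite -[in RHS](card_initseg bN) (subset_leqif_cards sL) eqEsubset sL.
Qed.

Lemma eq_weight L1 L2 b :
  (forall i : 'I_N, (i < b)%N -> (i \in L1) = (i \in L2)) ->
  weight L1 b = weight L2 b.
Proof.
move=> L12.
have capmE m : (m <= b)%N -> capm L1 m = capm L2 m.
  move=> mb; apply/setP => i; rewrite !inE.
  by case: (ltnP i m) => im; rewrite ?andbF // L12 // (leq_trans im mb).
have stopsE m : (m <= b)%N -> stops L1 m = stops L2 m.
  move=> mb; rewrite /stops capmE //; congr (_ && (_ || _)).
  apply: eq_forallb => i; case: (ltnP i m) => //= im.
  by rewrite L12 // (leq_trans im mb).
have stop_timeE : stop_time L1 b = stop_time L2 b.
  by apply: eq_bigl => m; rewrite stopsE // -ltnS ltn_ord.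
by rewrite /weight stop_timeE capmE // -stop_timeE stop_time_le.
Qed.

Lemma sum_weight_stopped b j : (b <= N)%N -> (j <= b)%N ->
  (b == 0%N) || size_stops b j ->
  \sum_(L : {set 'I_N} | (L \subset initseg b) && (#|L| == j)) weight L b =
    (ramsey j.+1 (b.+1 - j))%:R.
Proof.
move=> bN jb stop_b.
have stop_timeE L : L \subset initseg b -> #|L| = j -> stop_time L b = b.
  case: b bN jb stop_b => [|b] bN _ /= stop_b sL cL; first exact: stop_time0.
  by rewrite stop_timeS (stops_initseg bN sL) cL stop_b.
have card_terms :
    #|[pred L : {set 'I_N} | (L \subset initseg b) && (#|L| == j)]| = 'C(b, j).
  by rewrite -{2}(card_initseg bN) -cards_draws; apply: eq_card => L; rewrite inE.
rewrite (eq_bigr (fun=> ('C(b, j)%:R)^-1 * (ramsey j.+1 (b.+1 - j))%:R)).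
  rewrite sumr_const card_terms -[_ *+ 'C(b, j)]mulr_natr mulrAC mulVf ?mul1r //.
  by rewrite pnatr_eq0 -lt0n bin_gt0.
move=> L /andP [sL /eqP cL].
by rewrite /weight stop_timeE // capm_id // cL.
Qed.

Lemma sum_subsets_initsegS (V : nmodType) (F : {set 'I_N} -> V) b j
    (bN : (b < N)%N) :
  \sum_(L : {set 'I_N} | (L \subset initseg b.+1) && (#|L| == j.+1)) F L =
  \sum_(L : {set 'I_N} | (L \subset initseg b) && (#|L| == j))
     F (Ordinal bN |: L) +
  \sum_(L : {set 'I_N} | (L \subset initseg b) && (#|L| == j.+1)) F L.
Proof.
set x := Ordinal bN.
have initsegE : initseg b = initseg b.+1 :\ x.
  by apply/setP => i; rewrite !inE -val_eqE /= ltn_neqAle.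
have x_initseg : x \in initseg b.+1 by rewrite inE.
rewrite (bigID (fun L => x \in L)) /=; congr (_ + _).
  rewrite (reindex_onto (fun L => x |: L) (fun L => L :\ x)) /=; last first.
    by move=> L /andP [_ xL]; rewrite setD1K.
  apply: eq_bigl => L.
  have -> : ((x |: L) :\ x == L) = (x \notin L).
    by apply/eqP/idP => [<- | /setU1K //]; rewrite setD11.
  rewrite setU11 andbT subUset sub1set x_initseg initsegE subsetD1 cardsU1.
  by case: (x \in L); rewrite ?andbF ?andbT // add1n eqSS.
apply: eq_bigl => L; rewrite initsegE subsetD1.
by case: (x \in L); rewrite ?andbF ?andbT.
Qed.

Lemma weightE L : weight L N =
  ('C(kL c L + lL c L - 2, lL c L - 1)%:R)^-1 * (ramsey (lL c L) (kL c L))%:R.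
Proof.
rewrite /weight /kL /lL mL_stop_time.
have := capm_le L (stop_time L N).
set m := stop_time L N; set j := #|capm L m| => jm.
have -> : (m.+2 - j.+1 + j.+1 - 2 = m)%N by lia.
by rewrite subn1 /= -subSS.
Qed.

Hypothesis c_ge0 : 0 <= c.

Lemma ramsey_le_sum_weight b j : (b <= N)%N -> (j <= b)%N ->
  (ramsey j.+1 (b.+1 - j))%:R <=
    \sum_(L : {set 'I_N} | (L \subset initseg b) && (#|L| == j)) weight L b.
Proof.
elim: b j => [|b IH] j bN jb; first by rewrite sum_weight_stopped.
have [stop_b | run_b] := boolP (size_stops b.+1 j).
  by rewrite sum_weight_stopped // stop_b orbT.
have [j_gt0 jb'] : (0 < j)%N /\ (j <= b)%N.
  move: run_b; rewrite /size_stops /= negb_or => /andP [small full]; split.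
    rewrite lt0n; apply: contra small => /eqP ->.
    by rewrite mulr_ge0 // ln_ge0 // ler1n.
  by rewrite -ltnS ltn_neqAle full.
case: j j_gt0 jb jb' run_b => // j _ jb jb' run_b.
have weightS L : (L \subset initseg b.+1) && (#|L| == j.+1) ->
    weight L b.+1 = weight L b.
  case/andP => sL /eqP cL; apply: weight_stop_time.
  by rewrite stop_timeS (stops_initseg bN sL) cL (negbTE run_b).
have weight_setU1 L : weight (Ordinal bN |: L) b = weight L b.
  apply: eq_weight => i ib; rewrite in_setU1 -val_eqE /=.
  by rewrite (ltn_eqF ib).
rewrite (eq_bigr _ weightS) sum_subsets_initsegS.
under eq_bigr do rewrite weight_setU1.
apply: le_trans (lerD (IH j (ltnW bN) (ltnW jb')) (IH j.+1 (ltnW bN) jb')).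
rewrite -natrD ler_nat.
have -> : (b.+2 - j.+1 = (b - j).+1)%N by lia.
have -> : (b.+1 - j = (b - j).+1)%N by lia.
by rewrite subSS ramsey_leSS.
Qed.

End StoppingTime.

Local Open Scope ring_scope.

Theorem lemma6p2 (R : realType) (c : R) (hc : 0 < c) (l k : nat)
  (hl : (0 < l)%N) (hk : (0 < k)%N) :
  ((ramsey l k)%:R : R) <=
  \sum_(L : {set 'I_(k + l - 2)} | #|L| == (l - 1)%N)
     ('C(kL c L + lL c L - 2, lL c L - 1)%:R)^-1 * (ramsey (lL c L) (kL c L))%:R.
Proof.
have lN : (l - 1 <= k + l - 2)%N by lia.
have := ramsey_le_sum_weight (ltW hc) (leqnn (k + l - 2)) lN.
have -> : ((l - 1).+1 = l)%N by lia.
have -> : ((k + l - 2).+1 - (l - 1) = k)%N by lia.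
rewrite initsegT; under eq_bigl do rewrite subsetT.
by under eq_bigr do rewrite weightE.
Qed.
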